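(* Let $K=\mathbb{Q}[\sqrt{d}]$ with $d>1$ a square-free integer, let $\mathfrak{o}_K$ be its ring of integers, let $\epsilon>1$ be the fundamental unit of $\mathfrak{o}_K$, and let $C_2=\langle g\rangle$. Let $n$ be the order of $\epsilon$ modulo $2\mathfrak{o}_K$ (i.e. the least $n\ge 1$ with $\epsilon^n\in 1+2\mathfrak{o}_K$). Then $$\mathcal{U}_1(\mathfrak{o}_K[C_2])=\langle g\rangle\times\left\langle \tfrac{1+\epsilon^n}{2}+\tfrac{1-\epsilon^n}{2}g\right\rangle\cong C_2\times\mathbb{Z}.$$
   Context: The fundamental unit $\epsilon$ is the unique unit $\epsilon>1$ of $\mathfrak{o}_K$ with $\mathcal{U}(\mathfrak{o}_K)=\pm\langle\epsilon\rangle$. $\mathcal{U}_1(\mathfrak{o}_K[C_2])$ is the group of units of augmentation $1$ in the group ring $\mathfrak{o}_K[C_2]$. *)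

From HB Require Import structures.
From mathcomp Require Import all_boot all_order all_algebra all_field.
From mathcomp Require Import ring.
Set Implicit Arguments. Unset Strict Implicit. Unset Printing Implicit Defensive.
Import Order.TTheory GRing.Theory Num.Theory.
Local Open Scope ring_scope.

(* The group ring algC[C_2], C_2 = <g>: the element (a, b) stands for a + b g. *)
Definition grC : Type := (algC * algC)%type.
HB.instance Definition _ := GRing.Zmodule.on grC.

Definition gr_mul (x y : grC) : grC :=
  (x.1 * y.1 + x.2 * y.2, x.1 * y.2 + x.2 * y.1).
Definition gr_one : grC := (1, 0).

Lemma gr_mulA : associative gr_mul.
Proof. by move=> [a b] [c d] [e f]; rewrite /gr_mul /=; congr (_, _); ring. Qed.
Lemma gr_mulC : commutative gr_mul.
Proof. by move=> [a b] [c d]; rewrite /gr_mul /=; congr (_, _); ring. Qed.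
Lemma gr_mul1 : left_id gr_one gr_mul.
Proof. by move=> [a b]; rewrite /gr_mul /gr_one /=; congr (_, _); ring. Qed.
Lemma gr_mulDl : left_distributive gr_mul +%R.
Proof. by move=> [a b] [c d] [e f]; rewrite /gr_mul /= /add_pair /=; congr (_, _) => /=; ring. Qed.
Lemma gr_one_neq0 : gr_one != 0.
Proof. by apply/eqP => -[] /eqP; rewrite oner_eq0. Qed.

HB.instance Definition _ :=
  GRing.Zmodule_isComNzRing.Build grC gr_mulA gr_mulC gr_mul1 gr_mulDl gr_one_neq0.

Definition gr_unit : {pred grC} := fun x => x.1 ^+ 2 - x.2 ^+ 2 != 0.
Definition gr_inv (x : grC) : grC :=
  if x \in gr_unit then (x.1 / (x.1 ^+ 2 - x.2 ^+ 2), - x.2 / (x.1 ^+ 2 - x.2 ^+ 2))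
  else x.

Lemma gr_mulVx : {in gr_unit, left_inverse 1 gr_inv *%R}.
Proof.
move=> [a b] Hu; rewrite /gr_inv Hu.
rewrite [_ * _]/(gr_mul _ _) /=; congr (_, _); by field.
Qed.

Lemma gr_unitPl (x y : grC) : y * x = 1 -> x \in gr_unit.
Proof.
case: x y => [a b] [c d] /= [] E1 E2.
rewrite /gr_unit /in_mem /=; apply/eqP => H.
have : (c ^+ 2 - d ^+ 2) * (a ^+ 2 - b ^+ 2) = 1.
  have -> : (c ^+ 2 - d ^+ 2) * (a ^+ 2 - b ^+ 2) =
     (c * a + d * b) ^+ 2 - (c * b + d * a) ^+ 2 by ring.
  by rewrite E1 E2; ring.
by rewrite H mulr0 => /eqP; rewrite eq_sym oner_eq0.
Qed.

Lemma gr_invr_out : {in [predC gr_unit], gr_inv =1 id}.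
Proof. by move=> x; rewrite inE /gr_inv => /negbTE ->. Qed.

HB.instance Definition _ :=
  GRing.ComNzRing_hasMulInverse.Build grC gr_mulVx gr_unitPl gr_invr_out.

Definition gC2 : grC := (0, 1).
Definition aug (x : grC) : algC := x.1 + x.2.

Definition inK (d : nat) (x : algC) : Prop :=
  exists a b : rat, x = ratr a + ratr b * sqrtC d%:R.
Definition inOK (d : nat) (x : algC) : Prop := inK d x /\ x \in Aint.
Definition unitOK (d : nat) (x : algC) : Prop :=
  inOK d x /\ exists y, inOK d y /\ x * y = 1.

Definition squarefree (n : nat) : Prop := forall m : nat, (1 < m)%N -> ~~ (m * m %| n)%N.

Definition in_grOK (d : nat) (x : grC) : Prop := inOK d x.1 /\ inOK d x.2.
Definition U1 (d : nat) (x : grC) : Prop :=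
  [/\ in_grOK d x, aug x = 1 & exists y, in_grOK d y /\ x * y = 1].

Definition uC2 (eps : algC) (n : nat) : grC := ((1 + eps ^+ n) / 2, (1 - eps ^+ n) / 2).

From HB Require Import structures.
From mathcomp Require Import all_boot all_order all_algebra all_field.
From mathcomp Require Import ring.
Import Order.TTheory GRing.Theory Num.Theory.
Local Open Scope ring_scope.
Set Implicit Arguments. Unset Strict Implicit.

(* The two characters of C_2 split algC[C_2] as algC x algC.  An element x of
   augmentation 1 is determined by its value w = x.1 - x.2 under the sign
   character g |-> -1, namely x = (1 + w)/2 + (1 - w)/2 g, and x has
   coefficients in o_K exactly when w is in o_K and w = 1 mod 2.  Since this
   correspondence is multiplicative, U_1(o_K[C_2]) is isomorphic to the group of
   units of o_K congruent to 1 mod 2.  As -1 = 1 mod 2 these are the ±eps^k with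
   eps^k = 1 mod 2, i.e. with n | k; the sign -1 corresponds to g and eps^n to
   the stated generator, and ±eps^(nq) are pairwise distinct because eps > 1. *)

Definition chi_sign (x : grC) : algC := x.1 - x.2.
Definition aug1 (w : algC) : grC := ((1 + w) / 2, (1 - w) / 2).

Lemma two_neq0 : (2 : algC) != 0. Proof. by rewrite pnatr_eq0. Qed.

Lemma grC_mulE (a b c e : algC) :
  ((a, b) : grC) * (c, e) = (a * c + b * e, a * e + b * c).
Proof. by []. Qed.

Lemma chi_signM (x y : grC) : chi_sign (x * y) = chi_sign x * chi_sign y.
Proof. by case: x y => a b [c e]; rewrite /chi_sign /=; ring. Qed.

Lemma chi_sign1 : chi_sign 1 = 1.
Proof. by rewrite /chi_sign /= subr0. Qed.

Lemma chi_sign_aug1 (w : algC) : chi_sign (aug1 w) = w.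
Proof. by rewrite /chi_sign /aug1 /=; have := two_neq0 => ?; field. Qed.

Lemma aug_aug1 (w : algC) : aug (aug1 w) = 1.
Proof. by rewrite /aug /aug1 /=; have := two_neq0 => ?; field. Qed.

Lemma aug1_chi_sign (x : grC) : aug x = 1 -> aug1 (chi_sign x) = x.
Proof.
case: x => a b; rewrite /aug /aug1 /chi_sign /= => /(canRL (addKr a)) ->.
by have := two_neq0 => ?; congr (_, _); field.
Qed.

Lemma aug1_inj : injective aug1.
Proof. by move=> w w' /(congr1 chi_sign); rewrite !chi_sign_aug1. Qed.

Lemma aug1M (w w' : algC) : aug1 w * aug1 w' = aug1 (w * w').
Proof. by rewrite /aug1 grC_mulE; have := two_neq0 => ?; congr (_, _); field. Qed.

Lemma aug1_1 : aug1 1 = 1.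
Proof. by rewrite -[RHS]aug1_chi_sign ?chi_sign1 // /aug /= addr0. Qed.

Lemma gC2_aug1 : gC2 = aug1 (-1).
Proof. by rewrite -[LHS]aug1_chi_sign /chi_sign /= ?sub0r // /aug /= add0r. Qed.

Lemma aug1X (w : algC) (m : nat) : aug1 w ^+ m = aug1 (w ^+ m).
Proof. by elim: m => [|m IHm]; rewrite ?expr0 ?aug1_1 // !exprS IHm aug1M. Qed.

Lemma aug1V (w : algC) : w != 0 -> (aug1 w)^-1 = aug1 w^-1.
Proof.
move=> w0; have inv_w : aug1 w * aug1 w^-1 = 1 by rewrite aug1M divff ?aug1_1.
by rewrite -[LHS]mulr1 -inv_w mulrA mulVr ?mul1r //; apply/unitrPr; exists (aug1 w^-1).
Qed.

Lemma aug1z (w : algC) (k : int) : w != 0 -> aug1 w ^ k = aug1 (w ^ k).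
Proof.
move=> w0; case: k => m; first by rewrite -!exprnP aug1X.
by rewrite !NegzE -!invr_expz -!exprnP aug1X aug1V ?expf_neq0.
Qed.

Lemma gC2X_uC2z (eps : algC) (n : nat) (i : bool) (k : int) : eps != 0 ->
  gC2 ^+ i * uC2 eps n ^ k = aug1 ((-1) ^+ i * (eps ^+ n) ^ k).
Proof. by move=> eps0; rewrite gC2_aug1 aug1X aug1z ?expf_neq0 // aug1M. Qed.

Section IntegersOfK.
Variable d : nat.

Lemma inOK1 : inOK d 1.
Proof. by split; [exists 1, 0; rewrite rmorph1 rmorph0 mul0r addr0|exact: rpred1]. Qed.

Lemma inOKD x y : inOK d x -> inOK d y -> inOK d (x + y).
Proof.
move=> [[a [b ->]] x_int] [[c [e ->]] y_int]; split; last exact: rpredD.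
by exists (a + c), (b + e); rewrite !rmorphD /=; ring.
Qed.

Lemma inOKN x : inOK d x -> inOK d (- x).
Proof.
move=> [[a [b ->]] x_int]; split; last by rewrite rpredN.
by exists (- a), (- b); rewrite !rmorphN /=; ring.
Qed.

Lemma inOKB x y : inOK d x -> inOK d y -> inOK d (x - y).
Proof. by move=> Ox Oy; apply/inOKD/inOKN. Qed.

Lemma inOKM x y : inOK d x -> inOK d y -> inOK d (x * y).
Proof.
move=> [[a [b ->]] x_int] [[c [e ->]] y_int]; split; last exact: rpredM.
exists (a * c + b * e * d%:R), (a * e + b * c).
have sqrt_d2 : sqrtC (d%:R : algC) * sqrtC d%:R = d%:R by rewrite -expr2 sqrtCK.
set t := sqrtC _ in sqrt_d2 *.
by rewrite !rmorphD !rmorphM /= ratr_nat -sqrt_d2; ring.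
Qed.

Lemma inOKX x m : inOK d x -> inOK d (x ^+ m).
Proof.
by move=> Ox; elim: m => [|m IHm]; [rewrite expr0; exact: inOK1|rewrite exprS; exact: inOKM].
Qed.

Definition cong1_mod2 (x : algC) : Prop := inOK d ((x - 1) / 2).

Lemma cong1_mod2_inOK x : cong1_mod2 x -> inOK d x.
Proof.
move=> x1; have -> : x = (x - 1) / 2 + (x - 1) / 2 + 1.
  by have := two_neq0 => ?; field.
by apply: inOKD; [exact: inOKD|exact: inOK1].
Qed.

Lemma cong1_mod2_1 : cong1_mod2 1.
Proof. by rewrite /cong1_mod2 subrr mul0r -(subrr 1); apply: inOKB; exact: inOK1. Qed.

Lemma cong1_mod2M x y : cong1_mod2 x -> cong1_mod2 y -> cong1_mod2 (x * y).
Proof.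
move=> x1 y1; rewrite /cong1_mod2.
have -> : (x * y - 1) / 2 = x * ((y - 1) / 2) + (x - 1) / 2 by have := two_neq0 => ?; field.
by apply: inOKD => //; apply: inOKM => //; exact: cong1_mod2_inOK.
Qed.

Lemma cong1_mod2X x m : cong1_mod2 x -> cong1_mod2 (x ^+ m).
Proof.
move=> x1; elim: m => [|m IHm]; first by rewrite expr0; exact: cong1_mod2_1.
by rewrite exprS; exact: cong1_mod2M.
Qed.

Lemma cong1_mod2N x : cong1_mod2 (- x) <-> cong1_mod2 x.
Proof.
suff cong1N y : cong1_mod2 y -> cong1_mod2 (- y).
  by split=> [/cong1N|/cong1N //]; rewrite opprK.
move=> y1; rewrite /cong1_mod2.
have -> : (- y - 1) / 2 = - ((y - 1) / 2) - 1 by have := two_neq0 => ?; field.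
by apply: inOKB; [exact: inOKN|exact: inOK1].
Qed.

Lemma cong1_mod2_inv x y : cong1_mod2 x -> inOK d y -> x * y = 1 -> cong1_mod2 y.
Proof.
move=> x1 Oy xy1; rewrite /cong1_mod2.
have -> : (y - 1) / 2 = - (y * ((x - 1) / 2)).
  by rewrite mulrA mulrBr mulr1 [y * x]mulrC xy1; have := two_neq0 => ?; field.
by apply/inOKN/inOKM.
Qed.

Lemma in_grOK_aug1 w : cong1_mod2 w -> in_grOK d (aug1 w).
Proof.
move=> w1; split=> /=.
  have -> : (1 + w) / 2 = (w - 1) / 2 + 1 by have := two_neq0 => ?; field.
  by apply: inOKD => //; exact: inOK1.
have -> : (1 - w) / 2 = - ((w - 1) / 2) by have := two_neq0 => ?; field.
exact: inOKN.
Qed.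

Lemma cong1_mod2_chi_sign x : in_grOK d x -> aug x = 1 -> cong1_mod2 (chi_sign x).
Proof.
case: x => a b [_ Ob]; rewrite /aug /chi_sign /cong1_mod2 /= => /(canRL (addrK b)) ->.
have -> : (1 - b - b - 1) / 2 = - b by have := two_neq0 => ?; field.
exact: inOKN.
Qed.

Lemma U1_aug1 x : U1 d x <-> exists w, [/\ unitOK d w, cong1_mod2 w & x = aug1 w].
Proof.
split=> [[Ox aug_x [y [Oy xy1]]]|[w [[Ow [v [Ov wv1]]] w1 ->]]].
  have Ochi z : in_grOK d z -> inOK d (chi_sign z) by case=> ? ?; exact: inOKB.
  exists (chi_sign x); split; [split|exact: cong1_mod2_chi_sign|by rewrite aug1_chi_sign].
  - exact: Ochi.
  - by exists (chi_sign y); rewrite -chi_signM xy1 chi_sign1; split=> //; exact: Ochi.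
split; [exact: in_grOK_aug1|exact: aug_aug1|].
have v1 := cong1_mod2_inv w1 Ov wv1.
by exists (aug1 v); rewrite aug1M wv1 aug1_1; split=> //; exact: in_grOK_aug1.
Qed.

End IntegersOfK.

Lemma exprz_divz_period (F : fieldType) (S : F -> Prop) (x : F) (n : nat) (k : int) :
  x != 0 -> (0 < n)%N ->
  (forall y z, S y -> S z -> S (y * z)) ->
  (forall q : int, S ((x ^+ n) ^ q)) ->
  (forall m : nat, (0 < m < n)%N -> ~ S (x ^+ m)) ->
  S (x ^ k) -> x ^ k = (x ^+ n) ^ (k %/ n)%Z.
Proof.
move=> x0 n_gt0 S_mul S_period n_min Sxk.
have xkE : x ^ k = (x ^+ n) ^ (k %/ n)%Z * x ^ (k %% n)%Z.
  by rewrite {1}(divz_eq k n) expfzDr // -exprz_exp exprzAC -exprnP.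
have Sxr : S (x ^ (k %% n)%Z).
  have -> : x ^ (k %% n)%Z = (x ^+ n) ^ (- (k %/ n)%Z) * x ^ k.
    by rewrite xkE mulrA -expfzDr ?expf_neq0 // addNr expr0z mul1r.
  exact: S_mul.
have r_ge0 : 0 <= (k %% n)%Z by apply: modz_ge0; rewrite eqz_nat -lt0n.
have r_lt_n : (k %% n)%Z < n by apply: ltz_pmod; rewrite ltz_nat.
move: r_ge0 r_lt_n Sxr; rewrite xkE; case: (k %% n)%Z => // r _.
rewrite ltz_nat -exprnP; case: r => [_ _|r r_lt_n Sxr]; first by rewrite expr0 mulr1.
by case: (n_min r.+1).
Qed.

Lemma signed_exprz_inj (R : numFieldType) (x : R) (i j : bool) (k l : int) :
  0 < x -> x != 1 -> (-1) ^+ i * x ^ k = (-1) ^+ j * x ^ l -> i = j /\ k = l.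
Proof.
move=> x_gt0 x_neq1 eq_ij.
have signed_gt0 (b : bool) (m : int) : (0 < (-1) ^+ b * x ^ m) = ~~ b.
  by case: b; rewrite /= ?expr1 ?expr0 ?mulN1r ?mul1r ?oppr_gt0 ?exprz_gt0 ?(lt_gtF (exprz_gt0 m x_gt0)).
have ij : i = j by apply/negb_inj; rewrite -(signed_gt0 i k) -(signed_gt0 j l) eq_ij.
subst j; split=> //; apply/eqP; rewrite -subr_eq0.
have /mulfI /(_ _ _ eq_ij) xkl : (-1) ^+ i != 0 :> R by rewrite signr_eq0.
have x0 : x != 0 by rewrite gt_eqF.
have : x ^ (k - l) == 1 by rewrite expfzDr // xkl -expfzDr // subrr expr0z.
by rewrite pexprz_eq1 ?ltW // (negbTE x_neq1) orbF.
Qed.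

Section FundamentalUnit.
Variables (d : nat) (eps : algC) (n : nat).
Hypothesis eps_unit : unitOK d eps.
Hypothesis units_signed_eps :
  forall x, unitOK d x -> exists (s : bool) (k : int), x = (-1) ^+ s * eps ^ k.
Hypothesis n_gt0 : (0 < n)%N.
Hypothesis cong1_eps_n : cong1_mod2 d (eps ^+ n).
Hypothesis n_minimal : forall m : nat, (0 < m < n)%N -> ~ cong1_mod2 d (eps ^+ m).

Lemma eps_neq0 : eps != 0.
Proof.
have [_ [y [_ eps_y]]] := eps_unit; apply/eqP => eps0.
by move: eps_y; rewrite eps0 mul0r => /eqP; rewrite eq_sym oner_eq0.
Qed.

Lemma cong1_mod2_eps_nz (q : int) : cong1_mod2 d ((eps ^+ n) ^ q).
Proof.
have [_ [y [Oy eps_y]]] := eps_unit.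
have y_eps : y = eps^-1 by rewrite -[y](mulKf eps_neq0) eps_y mulr1.
have cong1V : cong1_mod2 d (eps ^+ n)^-1.
  apply: (cong1_mod2_inv cong1_eps_n); last by rewrite divff ?expf_neq0 ?eps_neq0.
  by rewrite -exprVn -y_eps; exact: inOKX.
case: q => m; first by rewrite -exprnP; exact: cong1_mod2X.
by rewrite NegzE -invr_expz -exprnP -exprVn; exact: cong1_mod2X.
Qed.

Lemma cong1_mod2_signed_eps_nz (i : bool) (q : int) :
  cong1_mod2 d ((-1) ^+ i * (eps ^+ n) ^ q).
Proof.
case: i => /=; rewrite ?expr1 ?expr0 ?mulN1r ?mul1r; last exact: cong1_mod2_eps_nz.
by apply/cong1_mod2N; exact: cong1_mod2_eps_nz.
Qed.

Lemma unitOK_signed_eps_nz (i : bool) (q : int) : unitOK d ((-1) ^+ i * (eps ^+ n) ^ q).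
Proof.
split; first exact/cong1_mod2_inOK/cong1_mod2_signed_eps_nz.
exists ((-1) ^+ i * (eps ^+ n) ^ (- q)); split.
  exact/cong1_mod2_inOK/cong1_mod2_signed_eps_nz.
by rewrite mulrACA -signr_addb addbb expr0 -expfzDr ?expf_neq0 ?eps_neq0 // addrN expr0z mulr1.
Qed.

Lemma cong1_mod2_units (w : algC) : unitOK d w -> cong1_mod2 d w ->
  exists (i : bool) (q : int), w = (-1) ^+ i * (eps ^+ n) ^ q.
Proof.
move=> /units_signed_eps [i [k ->]] w1; exists i, (k %/ n)%Z; congr (_ * _).
apply: (exprz_divz_period eps_neq0 n_gt0 _ cong1_mod2_eps_nz n_minimal).
  exact: cong1_mod2M.
by case: i w1 => /=; rewrite ?expr1 ?expr0 ?mulN1r ?mul1r // => /cong1_mod2N.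
Qed.

End FundamentalUnit.

Theorem mainTheorem5 (d : nat) (eps : algC) (n : nat) :
  (1 < d)%N -> squarefree d ->
  unitOK d eps -> 1 < eps ->
  (forall x, unitOK d x -> exists (s : bool) (k : int), x = (-1) ^+ s * eps ^ k) ->
  (0 < n)%N -> inOK d ((eps ^+ n - 1) / 2) ->
  (forall m : nat, (0 < m < n)%N -> ~ inOK d ((eps ^+ m - 1) / 2)) ->
  (forall x : grC, U1 d x <-> exists (i : bool) (k : int), x = gC2 ^+ i * uC2 eps n ^ k) /\
  (forall (i j : bool) (k l : int),
      gC2 ^+ i * uC2 eps n ^ k = gC2 ^+ j * uC2 eps n ^ l -> i = j /\ k = l).
Proof.
move=> _ _ eps_unit eps_gt1 units_signed_eps n_gt0 cong1_eps_n n_minimal.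
have eps0 := eps_neq0 eps_unit.
split=> [x|i j k l].
  rewrite U1_aug1; split=> [[w [w_unit w1 ->]]|[i [k ->]]].
    have [i [q ->]] :=
      cong1_mod2_units eps_unit units_signed_eps n_gt0 cong1_eps_n n_minimal w_unit w1.
    by exists i, q; rewrite gC2X_uC2z.
  exists ((-1) ^+ i * (eps ^+ n) ^ k); split; last exact: gC2X_uC2z.
    exact: unitOK_signed_eps_nz.
  exact: cong1_mod2_signed_eps_nz.
rewrite !gC2X_uC2z // => /aug1_inj; apply: signed_exprz_inj.
  by rewrite exprn_gt0 // (lt_trans ltr01).
by rewrite gt_eqF // exprn_egt1 // -lt0n.
Qed.
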